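(* Let $P$ be a valid path, let $V_P$ be the revenue computed by \textsc{MaxRev}$(P)$, and suppose $V_P<\frac{1}{\alpha(m_T^P)}B(P)$. Then at least one of the two paths $P'\in\{P_1,P_2\}$ returned by \textsc{TollPartition} applied to $P$ satisfies $$\frac{1}{\alpha(m_T^{P'})}B(P')\ \ge\ \frac{1}{\alpha(m_T^P)}B(P).$$
   Context: Setting: $G=(V,A)$ is a directed multigraph with $A=A_T\cup A_U$ partitioned into toll arcs and toll-free arcs, fixed costs $c:A_T\to\mathbf{N}$, $d:A_U\to\mathbf{N}$, and vertices $s,t$ such that there is an $s$–$t$ path using only toll-free arcs. Under a nonnegative toll vector $T$ a toll arc $e$ costs $c(e)+T(e)$ and a toll-free arc costs $d(e)$; path length is the sum of arc costs. $\mathcal{N}_T(P)$ is the network with all toll arcs not on $P$ deleted. An $s$–$t$ path $P$ is valid if it contains $m_T^P\ge1$ toll arcs and is a shortest $s$–$t$ path in $\mathcal{N}_0(P)$. For a path $P$ with toll arcs $\tau_1,\dots,\tau_m$ (in traversal order, $m=m_T^P$), set $\mathrm{TERM}(\tau_0)=s$, $\mathrm{INIT}(\tau_{m+1})=t$; $\mathcal{U}_{i,j}$ ($0\le i<j\le m+1$) is the length of a shortest toll-free path from $\mathrm{TERM}(\tau_i)$ to $\mathrm{INIT}(\tau_j)$ ($+\infty$ if none), $\upsilon_{i,j}$ is such a path, and $\mathcal{L}_{k,l}=\sum_{i=k}^{l-1}\mathcal{U}_{i,i+1}+\sum_{i=k+1}^{l-1}c(\tau_i)$. Let $\mathcal{L}_\infty$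 be the length of a shortest toll-free $s$–$t$ path and $\mathcal{L}(P)$ the length of $P$ with all tolls zero; $B(P)=\mathcal{L}_\infty-\mathcal{L}(P)$. Define $\alpha(1)=1$ and, for $k\ge2$, $\alpha(k)=\frac12\max\{1+\alpha(i)+\alpha(j):\ 0<i\le j<k,\ i+j\le k\}$. \textsc{MaxRev}$(P)$: set $k:=1$; while $k<m+1$: compute $t_k=\min_{0\le i<k<j\le m+1}\{\mathcal{U}_{i,j}-\mathcal{L}_{i,j}-\sum_{l=i+1}^{k-1}t_l\}$, let $(i'(k),j'(k))$ be the minimizing pair (ties broken by largest $j$, then smallest $i$), set $t_l:=0$ and $(i'(l),j'(l)):=(i'(k),j'(k))$ for all $k<l<j'(k)$, and set $k:=j'(k)$. Output tolls $T(\tau_k)=t_k$ on $P$ ($+\infty$ off $P$), revenue $V_P=\sum_{k=1}^m t_k$, and pairs $(i'(k),j'(k))_{k=1}^m$. \textsc{TollPartition}$(P)$: starting from $l:=m$, repeatedly record the pair $(i'(l),j'(l))$ and set $l:=i'(l)$ until $l=0$; let $q$ be the number of recorded pairs and let $(i(1),j(1)),\dots,(i(q),j(q))$ be the recorded pairs in reverse order of recording (so $i(1)=0$, $j(q)=m+1$). $P_1$ is the $s$–$t$ path that uses $\upsilon_{i(h),j(h)}$ for all odd $h$ and follows $P$ in between (from $\mathrm{INIT}(\tau_{j(h)})$ to $\mathrm{TERM}(\tau_{i(h+2)})$, from $s$ to $\mathrm{TERM}(\tau_{i(h)})$ before the first, and from $\mathrm{INIT}(\tau_{j(h)})$ to $t$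 after the last); $P_2$ is constructed in the same way from the even indices $h$. *)

From Stdlib Require Import ClassicalEpsilon.
From mathcomp Require Import all_boot all_order all_algebra.
Set Implicit Arguments. Unset Strict Implicit. Unset Printing Implicit Defensive.
Import Order.TTheory GRing.Theory Num.Theory.

(* Directed multigraph: vertices V, arcs A, arc a goes from src a to tgt a.
   toll a = true iff a is a toll arc (A_T); otherwise a is toll-free (A_U).
   w gives the fixed cost: w = c on toll arcs, w = d on toll-free arcs. *)
Section Network.
Variables (V A : finType) (src tgt : A -> V) (toll : pred A) (w : A -> nat)
          (s t : V).

Fixpoint walk (x y : V) (p : seq A) : bool :=
  if p is a :: p' then (src a == x) && walk (tgt a) y p' else x == y.

Definition spath (x y : V) (p : seq A) : bool :=
  walk x y p && uniq (x :: map tgt p).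

Definition cost (p : seq A) : nat := (\sum_(a <- p) w a)%N.

Definition toll_free (p : seq A) : bool := all (fun a => ~~ toll a) p.

Definition tf_rel : rel V :=
  fun u v => [exists a, [&& ~~ toll a, src a == u & tgt a == v]].
Definition tf_reach (x y : V) : bool := connect tf_rel x y.

Definition is_tf_dist (x y : V) (n : nat) : Prop :=
  (exists p, [/\ spath x y p, toll_free p & cost p = n]) /\
  (forall p, spath x y p -> toll_free p -> n <= cost p).

(* length of a shortest toll-free path from x to y (meaningful when
   tf_reach x y holds; otherwise the value +oo is represented by an
   unspecified number and never used) *)
Definition tf_dist (x y : V) : nat := epsilon (inhabits 0%N) (is_tf_dist x y).

Definition L_inf : nat := tf_dist s t.

Definition mT (p : seq A) : nat := count toll p.

Definition Bp (p : seq A) : int := (L_inf%:Z - (cost p)%:Z)%R.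

(* valid path: an s-t path with >= 1 toll arc which is a shortest s-t path
   in N_0(P) (toll arcs not on P deleted, tolls zero) *)
Definition valid (P : seq A) : Prop :=
  [/\ spath s t P, (0 < mT P)%N &
      forall q, spath s t q -> all (fun a => ~~ toll a || (a \in P)) q ->
        cost P <= cost q].

Section OnPath.
Variable P : seq A.

Definition taus : seq A := filter toll P.
Definition mP : nat := size taus.

Definition TERM (i : nat) : V :=
  if i is k.+1 then nth s (map tgt taus) k else s.
(* INIT(tau_j), with INIT(tau_{m+1}) = t *)
Definition INIT (j : nat) : V :=
  if j is k.+1 then nth t (map src taus) k else t.
Definition ctau (i : nat) : nat :=
  if i is k.+1 then nth 0%N (map w taus) k else 0%N.

Definition Ufin (i j : nat) : bool := tf_reach (TERM i) (INIT j).
Definition U (i j : nat) : nat := tf_dist (TERM i) (INIT j).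
Definition LL (i j : nat) : nat :=
  (\sum_(i <= l < j) U l l.+1 + \sum_(i.+1 <= l < j) ctau l)%N.

(* ts = [:: t_1; ...; t_(k-1)] (t_l stored at index l-1) *)
Definition mr_val (ts : seq int) (k : nat) (p : nat * nat) : int :=
  ((U p.1 p.2)%:Z - (LL p.1 p.2)%:Z
     - \sum_(p.1 <= l < k.-1) nth 0 ts l)%R.

Definition mr_better (ts : seq int) (k : nat) (p b : nat * nat) : bool :=
  (mr_val ts k p < mr_val ts k b)%R
  || ((mr_val ts k p == mr_val ts k b)
      && ((b.2 < p.2) || ((p.2 == b.2) && (p.1 < b.1)))).

(* pairs 0 <= i < k < j <= m+1 with U_{i,j} finite (pairs with
   U_{i,j} = +oo can never attain the minimum, as U_{0,m+1} < +oo) *)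
Definition mr_cands (k : nat) : seq (nat * nat) :=
  [seq ij <- [seq (i, j) | i <- iota 0 k, j <- iota k.+1 (mP.+1 - k)]
     | Ufin ij.1 ij.2].

Definition mr_best (ts : seq int) (k : nat) : nat * nat :=
  foldl (fun b p => if mr_better ts k p b then p else b) (0%N, mP.+1)
        (mr_cands k).

(* one run of the while loop, with fuel; returns ([t_1..], [(i'(1),j'(1));..]) *)
Fixpoint mr_loop (fuel k : nat) (ts : seq int) (prs : seq (nat * nat))
  : seq int * seq (nat * nat) :=
  if fuel is fuel'.+1 then
    if (k < mP.+1)%N then
      let p := mr_best ts k in
      let tk := mr_val ts k p in
      mr_loop fuel' p.2 (ts ++ tk :: nseq (p.2 - k.+1) 0%R)
              (prs ++ nseq (p.2 - k) p)
    else (ts, prs)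
  else (ts, prs).

Definition MaxRev : seq int * seq (nat * nat) := mr_loop mP.+1 1 [::] [::].
Definition tolls : seq int := MaxRev.1.
Definition mr_pairs : seq (nat * nat) := MaxRev.2.
Definition VP : int := (\sum_(x <- tolls) x)%R.

(* recorded pairs, in reverse order of recording *)
Fixpoint tp_loop (fuel l : nat) : seq (nat * nat) :=
  if fuel is f.+1 then
    if l is 0 then [::]
    else let p := nth (0%N, 0%N) mr_pairs l.-1 in rcons (tp_loop f p.1) p
  else [::].
Definition TP : seq (nat * nat) := tp_loop mP.+1 mP.

Definition tpos : seq nat :=
  [seq i <- iota 0 (size P) | nth false (map toll P) i].
(* number of arcs of P before INIT(tau_k) (k = 0: start; k = m+1: all) *)
Definition before (k : nat) : nat :=
  if k is k'.+1 then nth (size P) tpos k' else 0%N.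
(* number of arcs of P up to TERM(tau_i) *)
Definition upto (i : nat) : nat :=
  if i is k.+1 then (nth 0%N tpos k).+1 else 0%N.

Variable ups : nat -> nat -> seq A.

Fixpoint build (start : nat) (L : seq (nat * nat)) : seq A :=
  if L is (i, j) :: L' then
    drop (before start) (take (upto i) P) ++ ups i j ++ build j L'
  else drop (before start) P.

(* P_1 uses the pairs with odd h (0-based even index), P_2 even h *)
Definition P1 : seq A :=
  build 0 [seq nth (0%N, 0%N) TP h | h <- iota 0 (size TP) & ~~ odd h].
Definition P2 : seq A :=
  build 0 [seq nth (0%N, 0%N) TP h | h <- iota 0 (size TP) & odd h].

End OnPath.
End Network.

(* alpha(k) from the list l = [alpha(0); ...; alpha(k-1)] *)
Definition alpha_next (l : seq rat) (k : nat) : rat :=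
  if k == 1%N then 1%R
  else (2%:R^-1 * \big[Num.max/0%R]_(i < k) \big[Num.max/0%R]_(j < k
          | [&& (0 < i)%N, (i <= j)%N & (i + j <= k)%N])
          (1 + nth 0 l i + nth 0 l j))%R.

(* [alpha(0); ...; alpha(n)] ; alpha(0) := 0 is a dummy value *)
Fixpoint alpha_list (n : nat) : seq rat :=
  if n is n'.+1 then let l := alpha_list n' in rcons l (alpha_next l n)
  else [:: 0%R].

Definition alpha (k : nat) : rat := nth 0%R (alpha_list k) k.

From mathcomp Require Import all_boot all_order all_algebra.
From mathcomp Require Import zify ring lra.
From Stdlib Require Import Classical ClassicalEpsilon.
Set Implicit Arguments. Unset Strict Implicit. Unset Printing Implicit Defensive.
Import Order.TTheory GRing.Theory Num.Theory.

(* MaxRev chooses each [t_k] so that, for every [l], [t_1 + .. + t_l] equals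
   [t_1 + .. + t_(i'(l))] plus the slack [U - L] of [(i'(l), j'(l))], and the pair
   of [i'(l)] ends by [l]. Following the pairs back from [m], TollPartition thus
   gets a chain of pairs from [0] to [m + 1] whose slacks add up to [V_P], in which
   consecutive pairs overlap and pairs two apart are disjoint. The even-indexed and
   the odd-indexed pairs are then two families of disjoint shortcuts; taking them
   gives [P_1] and [P_2] with [B(P_c) >= B(P) - (slacks of its pairs)], as a slice
   of [P] costs at least [L] and a shortcut exactly [U]. Since the chain bypasses
   every toll arc, [m_T(P_1) + m_T(P_2) <= m_T(P)], both being positive. If both
   paths failed, summing the two inequalities would give
   [2 B(P) - V_P < (alpha(m_1) + alpha(m_2)) B(P) / alpha(m) <= 2 B(P) - B(P) / alpha(m)]. *)

Section Alpha.
Local Open Scope ring_scope.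

Lemma size_alpha_list n : size (alpha_list n) = n.+1.
Proof. by elim: n => [|n IH] //=; rewrite size_rcons IH. Qed.

Lemma nth_alpha_list n i : (i <= n)%N -> nth 0 (alpha_list n) i = alpha i.
Proof.
elim: n => [|n IH]; first by rewrite leqn0 => /eqP ->.
rewrite leq_eqVlt => /orP [/eqP -> //| lt_in].
by rewrite /= nth_rcons size_alpha_list lt_in IH.
Qed.

Lemma alphaS n : alpha n.+1 = alpha_next (alpha_list n) n.+1.
Proof. by rewrite /alpha /= nth_rcons size_alpha_list ltnn eqxx. Qed.

Lemma alpha_mean_le (n a b : nat) : (0 < a <= b)%N -> (a + b <= n.+1)%N ->
  2%:R^-1 * (1 + alpha a + alpha b) <= alpha n.+1.
Proof.
move=> /andP [a_gt0 le_ab] le_abn.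
have n1 : n.+1 != 1%N by apply/eqP => n0; move: le_abn; rewrite n0; lia.
have lt_an : (a < n.+1)%N by lia.
have lt_bn : (b < n.+1)%N by lia.
rewrite alphaS /alpha_next (negbTE n1).
rewrite -(@nth_alpha_list n a) -?(@nth_alpha_list n b); try lia.
apply: ler_wpM2l => //; apply: le_trans (le_bigmax _ _ (Ordinal lt_an)).
by apply: (@le_bigmax_cond _ _ _ _ (Ordinal lt_bn)); rewrite /= a_gt0 le_ab.
Qed.

Lemma alpha_ge1 n : (0 < n)%N -> 1 <= alpha n.
Proof.
elim/ltn_ind: n => -[|[|n]] IH // _.
have := @alpha_mean_le n.+1 1 1 isT isT.
have -> : alpha 1 = 1 by [].
lra.
Qed.

Lemma alpha_add_le (n a b : nat) : (0 < a)%N -> (0 < b)%N -> (a + b <= n)%N ->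
  1 + alpha a + alpha b <= 2 * alpha n.
Proof.
wlog le_ab : a b / (a <= b)%N.
  move=> H a_gt0 b_gt0 le_abn; case: (leqP a b) => [|/ltnW] le_ab.
    exact: H.
  by rewrite -addrA (addrC (alpha a)) addrA H // addnC.
case: n => [|n] a_gt0 b_gt0 le_abn; first lia.
have := @alpha_mean_le n a b; rewrite a_gt0 le_ab => /(_ isT le_abn); lra.
Qed.

Lemma ratio_dichotomy (R : realFieldType) (a a1 a2 b b1 b2 d1 d2 : R) :
  1 <= a1 -> 1 <= a2 -> 1 + a1 + a2 <= 2 * a -> 0 <= b ->
  b - d1 <= b1 -> b - d2 <= b2 -> d1 + d2 < a^-1 * b ->
  a^-1 * b <= a1^-1 * b1 \/ a^-1 * b <= a2^-1 * b2.
Proof.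
move=> a1_ge1 a2_ge1 le_a hb hb1 hb2 hd.
have a_gt0 : 0 < a by lra.
set r := a^-1 * b in hd *.
have r_ge0 : 0 <= r by rewrite mulr_ge0 // invr_ge0 ltW.
have ar : a * r = b by rewrite mulrA mulfV ?mul1r // gt_eqF.
case: (lerP r (a1^-1 * b1)) => [|]; first by left.
rewrite ltr_pdivrMl; last lra.
case: (lerP r (a2^-1 * b2)) => [|]; first by right.
rewrite ltr_pdivrMl; last lra.
(* summing the two failures gives 2b - (d1 + d2) < (a1 + a2) r <= 2b - r *)
have : (a1 + a2) * r <= (2 * a - 1) * r by rewrite ler_wpM2r //; lra.
rewrite mulrBl mulrDl -mulrA ar; lra.
Qed.

End Alpha.

Lemma ex_least_nat (Q : nat -> Prop) n : Q n ->
  exists2 n0, Q n0 & forall k, Q k -> (n0 <= k)%N.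
Proof.
elim/ltn_ind: n => n IH Qn.
case: (classic (exists2 k, (k < n)%N & Q k)) => [[k lt_kn Qk]|no_less].
  exact: IH lt_kn Qk.
exists n => // k Qk; rewrite leqNgt; apply/negP => lt_kn.
by apply: no_less; exists k.
Qed.

Lemma foldl_select_ind (T : eqType) (Q : T -> Prop) (better : T -> T -> bool) b l :
  Q b -> (forall p, p \in l -> Q p) ->
  Q (foldl (fun b p => if better p b then p else b) b l).
Proof.
elim: l b => [|a l IH] b //= Qb Ql.
apply: IH => [|p lp]; last by apply: Ql; rewrite inE lp orbT.
by case: ifP => _ //; apply: Ql; rewrite inE eqxx.
Qed.

Lemma drop_catl (T : Type) n (s1 s2 : seq T) : (n <= size s1)%N ->
  drop n (s1 ++ s2) = drop n s1 ++ s2.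
Proof.
rewrite drop_cat; case: ltnP => // le_s1n le_ns1.
have -> : n = size s1 by lia.
by rewrite subnn drop0 drop_size.
Qed.

Lemma last_take (T : Type) (x : T) s n : (n <= size s)%N ->
  last x (take n s) = nth x (x :: s) n.
Proof.
elim: s x n => [|y s IH] x [|n] //= le_ns.
by rewrite IH //; case: n le_ns => //= n le_ns; apply: set_nth_default; lia.
Qed.

Section Walks.
Variables (V A : finType) (src tgt : A -> V).

Lemma walk_cat x y p1 p2 : walk src tgt x y (p1 ++ p2) =
  walk src tgt x (last x (map tgt p1)) p1 && walk src tgt (last x (map tgt p1)) y p2.
Proof. by elim: p1 x => [|a p1 IH] x /=; rewrite ?eqxx // IH andbA. Qed.

Lemma walk_last x y p : walk src tgt x y p -> y = last x (map tgt p).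
Proof. by elim: p x => [|a p IH] x /=; [move/eqP | case/andP => _ /IH]. Qed.

Lemma src_nth_walk x y p k a0 : walk src tgt x y p -> (k < size p)%N ->
  src (nth a0 p k) = nth x (x :: map tgt p) k.
Proof.
elim: p x k => [|a p IH] x [|k] //=; first by case/andP => /eqP ->.
case/andP => _ wp lt_kp; rewrite (IH _ k wp) //.
by apply: set_nth_default; rewrite /= size_map; lia.
Qed.

Lemma walk_drop_take x y p i j : walk src tgt x y p -> (i <= j <= size p)%N ->
  walk src tgt (nth x (x :: map tgt p) i) (nth x (x :: map tgt p) j)
       (drop i (take j p)).
Proof.
move=> wp /andP [le_ij le_jp].
move: wp; rewrite -{1}(cat_take_drop j p) walk_cat => /andP [wp _].
move: wp; rewrite -[X in walk _ _ _ _ X](cat_take_drop i (take j p)) walk_cat.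
case/andP=> _; rewrite !map_take !last_take ?size_map ?size_take //; last first.
  by rewrite size_map; case: ifP; lia.
by case: i le_ij => [|i] //= le_ij; rewrite nth_take.
Qed.

Lemma uniq_drop_take x (l : seq V) i j : uniq (x :: l) -> (i <= j <= size l)%N ->
  uniq (nth x (x :: l) i :: drop i (take j l)).
Proof.
move=> ul /andP [le_ij le_jl].
have -> : nth x (x :: l) i :: drop i (take j l) = drop i (take j.+1 (x :: l)).
  rewrite [RHS](drop_nth x); last by rewrite size_take /=; case: ifP; lia.
  by case: i le_ij => [|i] //= le_ij; rewrite nth_take.
by apply/drop_uniq/take_uniq.
Qed.

End Walks.

Section TollPositions.
Variables (A : finType) (toll : pred A).

Lemma tpos_cons a p : tpos toll (a :: p) =
  if toll a then 0%N :: map succn (tpos toll p) else map succn (tpos toll p).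
Proof.
rewrite /tpos /= -(addn0 1%N) iotaDl filter_map.
have -> : [seq i <- iota 0 (size p) | preim (addn 1) (nth false (toll a :: map toll p)) i]
   = [seq i <- iota 0 (size p) | nth false (map toll p) i] by apply: eq_filter.
by case: (toll a).
Qed.

Lemma size_tpos p : size (tpos toll p) = count toll p.
Proof. by elim: p => [|a p IH] //; rewrite tpos_cons /=; case: (toll a); rewrite /= size_map IH. Qed.

Lemma nth_tpos p k : (k < count toll p)%N ->
  let i := nth 0%N (tpos toll p) k in
  [/\ (i < size p)%N, forall a0, nth a0 p i = nth a0 (filter toll p) k &
      count toll (take i p) = k].
Proof.
elim: p k => [|a p IH] k //=.
rewrite tpos_cons; case ta: (toll a) => /= lt_k.
  case: k lt_k => [|k] lt_k /=; first by split => //; rewrite ta.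
  rewrite (nth_map 0%N) ?size_tpos; last lia.
  have [|? ? cnt] := IH k; first lia.
  by split => //=; rewrite ta cnt.
rewrite (nth_map 0%N) ?size_tpos //.
by have [? ? cnt] := IH k lt_k; split => //=; rewrite ta cnt.
Qed.

Lemma toll_nth_tpos p k a0 : (k < count toll p)%N ->
  toll (nth a0 p (nth 0%N (tpos toll p) k)).
Proof.
move=> lt_k; have [_ -> _] := nth_tpos lt_k.
have : (k < size (filter toll p))%N by rewrite size_filter.
by move/(mem_nth a0); rewrite mem_filter => /andP [].
Qed.

Lemma ltn_nth_tpos p k k' : (k < k' < count toll p)%N ->
  (nth 0%N (tpos toll p) k < nth 0%N (tpos toll p) k')%N.
Proof.
move=> /andP [lt_kk' lt_k'].
have sorted_tpos : sorted ltn (tpos toll p).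
  by apply: sorted_filter; [exact: ltn_trans | exact: iota_ltn_sorted].
by apply: (sorted_ltn_nth ltn_trans 0%N sorted_tpos); rewrite // inE size_tpos; lia.
Qed.

End TollPositions.

Definition parity_pairs (L : seq (nat * nat)) (c : bool) :=
  [seq nth (0%N, 0%N) L h | h <- iota 0 (size L) & odd h == c].

Lemma big_parity_split (R : Type) (idx : R) (op : Monoid.com_law idx) L (F : nat * nat -> R) :
  \big[op/idx]_(0 <= h < size L) F (nth (0%N, 0%N) L h) =
  op (\big[op/idx]_(p <- parity_pairs L false) F p) (\big[op/idx]_(p <- parity_pairs L true) F p).
Proof.
rewrite !big_map !big_filter /index_iota subn0 (bigID odd) /= Monoid.mulmC.
by congr (op _ _); apply: eq_bigl => h; case: (odd h).
Qed.

Lemma cost_cat (A : finType) (w : A -> nat) p1 p2 : cost w (p1 ++ p2) = cost w p1 + cost w p2.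
Proof. exact: big_cat. Qed.

Lemma cost_seq1 (A : finType) (w : A -> nat) a : cost w [:: a] = w a.
Proof. exact: big_seq1. Qed.

Lemma sumz_Posz (I : Type) (r : seq I) (F : I -> nat) :
  (\sum_(i <- r) (F i)%:Z)%R = (\sum_(i <- r) F i)%N.
Proof. by rewrite (big_morph Posz PoszD (erefl _)). Qed.

Section TollPath.
Variables (V A : finType) (src tgt : A -> V) (toll : pred A) (w : A -> nat)
  (s t : V) (P : seq A) (ups : nat -> nat -> seq A).

Local Notation m := (mP toll P).
Local Notation pos k := (nth 0%N (tpos toll P) k).
Local Notation Uf := (Ufin src tgt toll s t P).
Local Notation UU := (U src tgt toll w s t P).
Local Notation LLL := (LL src tgt toll w s t P).
Local Notation d := (0%N, 0%N).

Definition slice i j := drop i (take j P).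
Definition vertex k := nth s (s :: map tgt P) k.

Lemma mP_count : m = count toll P.
Proof. by rewrite /mP /taus size_filter. Qed.

Lemma INIT_last : INIT src toll t P m.+1 = t.
Proof. by rewrite /INIT nth_default // size_map. Qed.

Lemma before_last : before toll P m.+1 = size P.
Proof. by rewrite /before nth_default // size_tpos mP_count. Qed.

Lemma pos_lt k : (k < m)%N -> (pos k < size P)%N.
Proof. by rewrite mP_count => /nth_tpos []. Qed.

Lemma before_pos k : (k < m)%N -> before toll P k.+1 = pos k.
Proof. by move=> lt_km; apply: set_nth_default; rewrite size_tpos -mP_count. Qed.

Lemma upto_le i : (i <= m)%N -> (upto toll P i <= size P)%N.
Proof. by case: i => [|i] //= /pos_lt. Qed.

Lemma before_le j : (j <= m.+1)%N -> (before toll P j <= size P)%N.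
Proof.
case: j => [|j] //= le_jm.
case: (ltnP j m) => [lt_jm | le_mj].
  by rewrite -/(before toll P j.+1) before_pos // ltnW ?pos_lt.
have -> : j = m by lia.
by rewrite -/(before toll P m.+1) before_last.
Qed.

Lemma before_upto k i : (k <= i <= m)%N -> (before toll P k <= upto toll P i)%N.
Proof.
case: k => [|k] //; case: i => [|i] //= /andP [le_ki le_im].
rewrite -/(before toll P k.+1) before_pos; last lia.
case: (ltnP k i) => [lt_ki | le_ik]; last by have -> : k = i by lia.
have : (pos k < pos i)%N by apply: ltn_nth_tpos; rewrite -mP_count; lia.
lia.
Qed.

Lemma upto_before i j : (i < j <= m.+1)%N -> (upto toll P i <= before toll P j)%N.
Proof.
move=> /andP [lt_ij le_jm].
case: (ltnP j m.+1) => [lt_jm | le_mj]; last first.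
  have -> : j = m.+1 by lia.
  by rewrite before_last upto_le //; lia.
case: i lt_ij => [|i] //; case: j le_jm lt_jm => [|j] //= _ lt_jm lt_ij.
rewrite -/(before toll P j.+1) before_pos //.
have : (pos i < pos j)%N by apply: ltn_nth_tpos; rewrite -mP_count; lia.
lia.
Qed.

Lemma count_take_upto i : (i <= m)%N -> count toll (take (upto toll P i) P) = i.
Proof.
case: i => [|i] /=; first by rewrite take0.
rewrite mP_count => lt_i; have [lt_pos _ cnt] := nth_tpos lt_i.
have [a0 _] : exists a0 : A, True by case: (P) lt_pos => [|a0 ?] //; exists a0.
by rewrite (take_nth a0) // -cats1 count_cat cnt /= (toll_nth_tpos a0 lt_i) addn1.
Qed.

Lemma count_take_before j : (j <= m.+1)%N -> count toll (take (before toll P j) P) = j.-1.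
Proof.
case: j => [|j] /= le_jm; first by rewrite take0.
case: (ltnP j m) => [lt_jm | le_mj].
  rewrite -/(before toll P j.+1) before_pos //.
  by have [] := @nth_tpos _ toll P j; rewrite -?mP_count.
have -> : j = m by lia.
by rewrite -/(before toll P m.+1) before_last take_size mP_count.
Qed.

Lemma slice_cat i j k : (i <= j <= k)%N -> slice i k = slice i j ++ slice j k.
Proof.
move=> /andP [le_ij le_jk]; rewrite /slice.
rewrite -{1}(cat_take_drop j (take k P)) take_takel //.
case: (leqP i (size (take j P))) => [le_i | ]; first by rewrite drop_catl.
rewrite size_take; case: ifP => [_|/negbT]; first lia.
rewrite -leqNgt => le_Pj lt_Pi.
by rewrite !drop_oversize // ?cats0 ?size_take; case: ltnP; lia.
Qed.

Lemma count_slice i j : (i <= j)%N ->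
  count toll (slice i j) = count toll (take j P) - count toll (take i P).
Proof.
move=> le_ij; rewrite /slice -[in RHS](cat_take_drop i (take j P)).
by rewrite take_takel // count_cat; lia.
Qed.

Lemma cost_slice_cat i j k : (i <= j <= k)%N ->
  cost w (slice i k) = cost w (slice i j) + cost w (slice j k).
Proof. by move=> le_ijk; rewrite (slice_cat le_ijk) cost_cat. Qed.

Lemma slice_toll_arc k a0 : (k < m)%N ->
  slice (before toll P k.+1) (upto toll P k.+1) = [:: nth a0 P (pos k)].
Proof.
move=> lt_km; rewrite /slice before_pos // /= (take_nth a0) ?pos_lt //.
rewrite -cats1 drop_catl ?drop_oversize ?size_take ?pos_lt //.
Qed.

Lemma ctau_nth k a0 : (k < m)%N -> ctau toll w P k.+1 = w (nth a0 P (pos k)).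
Proof.
rewrite mP_count => lt_k; rewrite /ctau (nth_map a0) ?size_filter //.
by have [_ -> _] := nth_tpos lt_k.
Qed.

Lemma vertex_upto i : (i <= m)%N -> vertex (upto toll P i) = TERM tgt toll s P i.
Proof.
case: i => [|i] //=; rewrite mP_count => lt_i; rewrite /vertex /=.
have [lt_pos nth_pos _] := nth_tpos lt_i.
have [a0 _] : exists a0 : A, True by case: (P) lt_pos => [|a0 ?] //; exists a0.
by rewrite (nth_map a0) // nth_pos (nth_map a0) // size_filter.
Qed.

Lemma slice_toll_free l : (l <= m)%N ->
  toll_free toll (slice (upto toll P l) (before toll P l.+1)).
Proof.
move=> le_lm; rewrite /toll_free all_predC has_count count_slice ?upto_before ?ltnSn //.
by rewrite count_take_upto // count_take_before // subnn.
Qed.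

Lemma tf_dist_spec x y p : spath src tgt x y p -> toll_free toll p ->
  is_tf_dist src tgt toll w x y (tf_dist src tgt toll w x y).
Proof.
move=> sp tp.
have [n0 [q [sq tq cq]] n0_min] := @ex_least_nat
  (fun n => exists q, [/\ spath src tgt x y q, toll_free toll q & cost w q = n]) _
  (ex_intro _ p (And3 sp tp erefl)).
apply: epsilon_spec; exists n0; split; first by exists q.
by move=> q' sq' tq'; apply: n0_min; exists q'.
Qed.

Section OnSimplePath.
Hypothesis P_spath : spath src tgt s t P.

Lemma vertex_before j : (0 < j <= m.+1)%N -> vertex (before toll P j) = INIT src toll t P j.
Proof.
case: j => [|j] //= le_jm; move: P_spath => /andP [wP _].
case: (ltnP j m) => [lt_jm | le_mj].
  have lt_j : (j < count toll P)%N by rewrite -mP_count.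
  have [lt_pos nth_pos _] := nth_tpos lt_j.
  have [a0 _] : exists a0 : A, True by case: (P) lt_pos => [|a0 ?] //; exists a0.
  rewrite -/(before toll P j.+1) before_pos // /vertex -(src_nth_walk a0 wP lt_pos).
  by rewrite nth_pos (nth_map a0) ?size_filter.
have -> : j = m by lia.
rewrite -/(before toll P m.+1) before_last -/(INIT src toll t P m.+1) INIT_last.
by rewrite /vertex (walk_last wP) (last_nth s) size_map.
Qed.

Lemma slice_spath i j : (i < j <= m.+1)%N ->
  spath src tgt (TERM tgt toll s P i) (INIT src toll t P j)
    (slice (upto toll P i) (before toll P j)).
Proof.
move=> lt_ij.
have le_bP : (before toll P j <= size P)%N by apply: before_le; lia.
have le_ubP : (upto toll P i <= before toll P j <= size P)%N.
  by rewrite upto_before.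
rewrite -vertex_upto -?vertex_before; try lia.
move: P_spath => /andP [wP uP]; rewrite /vertex /slice; apply/andP; split.
  exact: (walk_drop_take wP le_ubP).
by rewrite map_drop map_take; apply: uniq_drop_take; rewrite ?size_map.
Qed.

Lemma U_le_slice l : (l <= m)%N ->
  (UU l l.+1 <= cost w (slice (upto toll P l) (before toll P l.+1)))%N.
Proof.
move=> le_lm; have sp := @slice_spath l l.+1; rewrite ltnSn ltnS le_lm in sp.
have tp := slice_toll_free le_lm.
by have [_ dist_le] := tf_dist_spec (sp isT) tp; exact: dist_le (sp isT) tp.
Qed.

Lemma LL_le_slice i j : (i < j <= m.+1)%N ->
  (LLL i j <= cost w (slice (upto toll P i) (before toll P j)))%N.
Proof.
move=> /andP [lt_ij]; have [d ->] : exists d, j = (i + d.+1)%N by exists (j - i).-1; lia.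
elim: d i {lt_ij} => [|d IH] i le_jm.
  by rewrite /LL addn1 big_nat1 big_geq // addn0; apply: U_le_slice; lia.
have lt_im : (i < m)%N by lia.
have [a0 _] : exists a0 : A, True by case: (P) (pos_lt lt_im) => [|a0 ?] //; exists a0.
rewrite /LL (@big_ltn _ _ _ i); last lia.
rewrite (@big_ltn _ _ _ i.+1 _ (ctau toll w P)); last lia.
rewrite -/(LL src tgt toll w s t P i.+1 (i + d.+2)).
have le_ub : (upto toll P i <= before toll P i.+1 <= before toll P (i + d.+2))%N.
  apply/andP; split; first by apply: upto_before; lia.
  by apply: (@leq_trans (upto toll P i.+1)); [apply: before_upto | apply: upto_before]; lia.
have le_bu : (before toll P i.+1 <= upto toll P i.+1 <= before toll P (i + d.+2))%N.
  by apply/andP; split; [apply: before_upto | apply: upto_before]; lia.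
rewrite (cost_slice_cat le_ub) (cost_slice_cat le_bu).
rewrite (slice_toll_arc a0) // cost_seq1 -ctau_nth //.
have := U_le_slice (ltnW lt_im); have := IH i.+1; rewrite addSnnS => /(_ le_jm).
rewrite /LL; lia.
Qed.

End OnSimplePath.

Definition slack (p : nat * nat) : int := ((UU p.1 p.2)%:Z - (LLL p.1 p.2)%:Z)%R.
Definition prefix_sum (ts : seq int) x : int := (\sum_(0 <= y < x) nth 0 ts y)%R.
Definition pair_at (prs : seq (nat * nat)) l := nth d prs l.-1.

Lemma prefix_sum_cat ts r x : (x <= size ts)%N -> prefix_sum (ts ++ r) x = prefix_sum ts x.
Proof.
move=> le_x; apply: eq_big_nat => y /andP [_ lt_yx].
by rewrite nth_cat (leq_trans lt_yx le_x).
Qed.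

Section MaxRev.
Hypothesis st_reach : Uf 0 m.+1.

Lemma mr_best_range ts k : (0 < k <= m)%N ->
  let p := mr_best src tgt toll w s t P ts k in
  [/\ (p.1 < k)%N, (k < p.2)%N, (p.2 <= m.+1)%N & Uf p.1 p.2].
Proof.
move=> /andP [k_gt0 le_km].
apply: (@foldl_select_ind _ (fun p => [/\ (p.1 < k)%N, (k < p.2)%N, (p.2 <= m.+1)%N & Uf p.1 p.2]));
  first by split.
move=> p; rewrite mem_filter => /andP [Up /allpairsP [[i j] [/= i_in j_in e]]].
rewrite e /= in Up *.
move: i_in j_in; rewrite !mem_iota /= => lt_ik /andP [lt_kj le_j].
by split => //; lia.
Qed.

(* MaxRev's state when its loop reaches [k]; [pair_at prs l] is [(i'(l), j'(l))]. *)
Definition mr_inv k ts prs :=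
  [/\ (0 < k <= m.+1)%N, size ts = k.-1, size prs = k.-1,
   forall l, (0 < l < k)%N -> let p := pair_at prs l in
     [/\ (p.1 < l)%N, (l < p.2)%N, (p.2 <= k)%N, Uf p.1 p.2
       & prefix_sum ts l = (prefix_sum ts p.1 + slack p)%R]
   & forall x y, (0 < x)%N -> (x <= y < k)%N ->
     ((pair_at prs x).2 <= y)%N \/ pair_at prs x = pair_at prs y].

Lemma mr_inv_step k ts prs : mr_inv k ts prs -> (k <= m)%N ->
  let p := mr_best src tgt toll w s t P ts k in
  let tk := mr_val src tgt toll w s t P ts k p in
  mr_inv p.2 (ts ++ tk :: nseq (p.2 - k.+1) 0%R) (prs ++ nseq (p.2 - k) p).
Proof.
case=> k_range size_ts size_prs pair_spec nested le_km p tk.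
have k_range' : (0 < k <= m)%N by lia.
have [lt_p1k lt_kp2 le_p2m Up] := mr_best_range ts k_range'.
rewrite -/p in lt_p1k lt_kp2 le_p2m Up.
set ts' := ts ++ _; set prs' := prs ++ _.
have pair_old l : (0 < l < k)%N -> pair_at prs' l = pair_at prs l.
  by move=> l_range; rewrite /pair_at nth_cat size_prs; case: ifP => //; lia.
have pair_new l : (k <= l < p.2)%N -> pair_at prs' l = p.
  move=> l_range; rewrite /pair_at nth_cat size_prs; case: ifP; first lia.
  by rewrite nth_nseq; case: ifP => //; lia.
have sum_old x : (x <= k.-1)%N -> prefix_sum ts' x = prefix_sum ts x.
  by move=> le_x; apply: prefix_sum_cat; rewrite size_ts.
(* [t_k] is chosen so that the prefix sums reach the slack of [p]; then zeros follow *)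
have sum_new l : (k <= l < p.2)%N -> prefix_sum ts' l = (prefix_sum ts p.1 + slack p)%R.
  move=> l_range; rewrite /prefix_sum (@big_cat_nat _ _ _ k 0 l) //=; last lia.
  rewrite [X in (_ + X)%R]big1_seq ?addr0; last first.
    move=> y; rewrite mem_index_iota /ts' nth_cat size_ts => y_range.
    case: ifP; first lia.
    case e: (y - k.-1)%N => [|z]; first lia.
    by rewrite /= nth_nseq; case: ifP.
  have -> : k = (k.-1).+1 by lia.
  rewrite big_nat_recr //= -/(prefix_sum ts' k.-1) sum_old //.
  rewrite /ts' nth_cat size_ts ltnn subnn /= /tk /mr_val -/p.
  rewrite /prefix_sum (@big_cat_nat _ _ _ p.1 0 k.-1) /slack //=; [ring | lia].
split.
- by lia.
- by rewrite size_cat /= size_nseq size_ts; lia.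
- by rewrite size_cat size_nseq size_prs; lia.
- move=> l l_range; case: (ltnP l k) => [lt_lk | le_kl].
    rewrite pair_old; last lia.
    have [|? ? ? ? sum_l] := pair_spec l; first lia.
    by split => //; [lia | rewrite !sum_old ?sum_l //; lia].
  have l_new : (k <= l < p.2)%N by lia.
  rewrite pair_new //; split; [lia | lia | done | done |].
  by rewrite (sum_new _ l_new) sum_old //; lia.
- move=> x y x_gt0 xy_range; case: (ltnP y k) => [lt_yk | le_ky].
    by rewrite !pair_old; [apply: nested => //; lia | lia | lia].
  case: (ltnP x k) => [lt_xk | le_kx].
    left; rewrite pair_old; last lia.
    by have [|_ _ ? _ _] := pair_spec x; lia.
  by right; rewrite !pair_new //; lia.
Qed.

Lemma mr_inv_loop fuel k ts prs : mr_inv k ts prs -> (m.+2 <= fuel + k)%N ->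
  mr_inv m.+1 (mr_loop src tgt toll w s t P fuel k ts prs).1
              (mr_loop src tgt toll w s t P fuel k ts prs).2.
Proof.
elim: fuel k ts prs => [|f IH] k ts prs inv_k le_fuel; first by case: inv_k; lia.
rewrite /=; case: ifP => [le_km | /negbT]; last first.
  by case: inv_k => k_range *; have -> : m.+1 = k by lia.
apply: IH; first exact: mr_inv_step.
case: inv_k => k_range *.
have k_range' : (0 < k <= m)%N by lia.
by have [] := mr_best_range ts k_range'; lia.
Qed.

Lemma mr_inv_final : mr_inv m.+1 (tolls src tgt toll w s t P) (mr_pairs src tgt toll w s t P).
Proof. by apply: mr_inv_loop; [split => //; lia | lia]. Qed.

Local Notation pair_of l := (pair_at (mr_pairs src tgt toll w s t P) l).
Local Notation sum_to l := (prefix_sum (tolls src tgt toll w s t P) l).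

Lemma mr_pair_spec l : (0 < l <= m)%N ->
  [/\ ((pair_of l).1 < l)%N, (l < (pair_of l).2)%N, ((pair_of l).2 <= m.+1)%N,
      Uf (pair_of l).1 (pair_of l).2 & sum_to l = (sum_to (pair_of l).1 + slack (pair_of l))%R].
Proof. by move=> l_range; have [_ _ _ pair_spec _] := mr_inv_final; apply: pair_spec; lia. Qed.

Lemma mr_pair_nested l : (0 < l <= m)%N -> (0 < (pair_of l).1)%N ->
  ((pair_of (pair_of l).1).2 <= l)%N.
Proof.
move=> l_range i_gt0; have [_ _ _ _ nested] := mr_inv_final.
have [lt_il _ _ _ _] := mr_pair_spec l_range.
have [|lt_i _ _ _ _] := @mr_pair_spec (pair_of l).1; first lia.
have [|//|same] := nested (pair_of l).1 l i_gt0; first lia.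
by rewrite same in lt_i; lia.
Qed.

Lemma VP_prefix_sum : VP src tgt toll w s t P = sum_to m.
Proof.
have [_ size_ts _ _ _] := mr_inv_final.
by rewrite /VP (big_nth 0%R) size_ts.
Qed.

(* [L] lists the pairs recorded by TollPartition started at [l], in reverse order. *)
Definition tp_inv l (L : seq (nat * nat)) :=
  [/\ (0 < size L)%N, (nth d L 0).1 = 0%N, nth d L (size L).-1 = pair_of l,
   forall h, (h.+1 < size L)%N ->
     [/\ ((nth d L h.+1).1 < (nth d L h).2)%N, ((nth d L h).2 <= l)%N,
         (0 < (nth d L h.+1).1)%N
       & (h.+2 < size L -> (nth d L h).2 <= (nth d L h.+2).1)%N]
   & (forall h, (h < size L)%N ->
       [/\ ((nth d L h).1 < (nth d L h).2)%N, ((nth d L h).2 <= m.+1)%N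
         & Uf (nth d L h).1 (nth d L h).2])
     /\ (\sum_(0 <= h < size L) slack (nth d L h))%R = sum_to l].

Lemma tp_inv_rcons l L : (0 < l <= m)%N -> (0 < (pair_of l).1)%N ->
  tp_inv (pair_of l).1 L -> tp_inv l (rcons L (pair_of l)).
Proof.
move=> l_range i_gt0 [size_L start_L last_L links_L [pairs_L sum_L]].
have [lt_il lt_lj le_jm Uij sum_l] := mr_pair_spec l_range.
have i_range : (0 < (pair_of l).1 <= m)%N by lia.
have [_ lt_ij _ _ _] := mr_pair_spec i_range.
have le_ji := mr_pair_nested l_range i_gt0.
set p := pair_of l in lt_il lt_lj le_jm Uij sum_l i_gt0 links_L last_L sum_L le_ji lt_ij *.
have nth_L h : (h < size L)%N -> nth d (rcons L p) h = nth d L h.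
  by move=> lt_hL; rewrite nth_rcons lt_hL.
have nth_last : nth d (rcons L p) (size L) = p by rewrite nth_rcons ltnn eqxx.
split.
- by rewrite size_rcons.
- by rewrite nth_L.
- by rewrite size_rcons /= nth_last.
- move=> h; rewrite size_rcons ltnS => lt_hL.
  case: (ltnP h.+1 (size L)) => [lt_h1L | le_Lh1].
    have [a1 a2 a3 a4] := links_L h lt_h1L.
    rewrite (nth_L h.+1) // (nth_L h); last lia.
    split => //; first lia.
    move=> lt_h2; case: (ltnP h.+2 (size L)) => [lt_h2L | le_Lh2].
      by rewrite nth_L //; apply: a4.
    have -> : h.+2 = size L by lia.
    by rewrite nth_last; lia.
  have h1_eq : h.+1 = size L by lia.
  rewrite h1_eq nth_last nth_L; last lia.
  have -> : nth d L h = pair_of p.1 by rewrite -last_L; congr nth; lia.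
  by split => //; lia.
- split.
    move=> h; rewrite size_rcons ltnS => le_hL.
    case: (ltngtP h (size L)) => [lt_hL | | ->]; [by rewrite nth_L //; apply: pairs_L | lia |].
    by rewrite nth_last; split => //; lia.
  rewrite size_rcons big_nat_recr //= nth_last.
  rewrite (@eq_big_nat _ _ _ 0 (size L) _ (fun h => slack (nth d L h))) ?sum_L ?sum_l //.
  by move=> h /andP [_ lt_hL]; rewrite nth_L.
Qed.

Lemma tp_loop_inv f l : (0 < l <= m)%N -> (l < f)%N ->
  tp_inv l (tp_loop src tgt toll w s t P f l).
Proof.
elim: f l => [|f IH] [|l] // l_range lt_lf.
rewrite /= -/(pair_at _ l.+1).
have [lt_il lt_lj le_jm Uij sum_l] := mr_pair_spec l_range.
case i_eq: (pair_of l.+1).1 => [|i].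
  have -> : tp_loop src tgt toll w s t P f 0 = [::] by case: f {IH lt_lf}.
  split => //=; split; first by case => //= _; split => //; lia.
  by rewrite big_nat1 sum_l i_eq /prefix_sum big_geq //= add0r.
by rewrite -i_eq; apply: tp_inv_rcons; rewrite ?i_eq //; apply: IH; lia.
Qed.

Lemma TP_inv : (0 < m)%N -> tp_inv m (TP src tgt toll w s t P).
Proof. by move=> m_gt0; apply: (@tp_loop_inv m.+1 m); rewrite ?m_gt0 /=. Qed.

End MaxRev.

Fixpoint disjoint_shortcuts k (M : seq (nat * nat)) : Prop :=
  if M is p :: M' then
    [/\ (k <= p.1)%N, (p.1 < p.2)%N, (p.2 <= m.+1)%N, Uf p.1 p.2 & disjoint_shortcuts p.2 M']
  else (k <= m.+1)%N.

(* the number of toll arcs [tau_(i+1), .., tau_(j-1)] skipped by the shortcut [(i, j)] *)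
Definition bypassed (p : nat * nat) := (p.2 - 1 - p.1)%N.

Lemma disjoint_shortcuts_bound k M : disjoint_shortcuts k M ->
  (\sum_(p <- M) bypassed p + size M + k <= m.+1)%N.
Proof.
elim: M k => [|[i j] M IH] k /=; first by rewrite big_nil; lia.
case=> /= le_ki lt_ij _ _ /IH.
by rewrite big_cons /bypassed /=; lia.
Qed.

Lemma P1E : P1 src tgt toll w s t P ups =
  build toll P ups 0 (parity_pairs (TP src tgt toll w s t P) false).
Proof. by rewrite /P1 /parity_pairs; congr build; congr map; apply: eq_filter => h; case: (odd h). Qed.

Lemma P2E : P2 src tgt toll w s t P ups =
  build toll P ups 0 (parity_pairs (TP src tgt toll w s t P) true).
Proof. by rewrite /P2 /parity_pairs; congr build; congr map; apply: eq_filter => h; case: (odd h). Qed.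

Lemma P2_single : (size (TP src tgt toll w s t P) <= 1)%N -> P2 src tgt toll w s t P ups = P.
Proof. by rewrite /P2; case: (size _) => [|[|]] //= _; rewrite drop0. Qed.

Section Chain.
Variable L : seq (nat * nat).
Local Notation q := (size L).
Local Notation Lh h := (nth d L h).
Hypothesis chain_start : (Lh 0).1 = 0%N.
Hypothesis chain_link : forall h, (h.+1 < q)%N ->
  [/\ ((Lh h.+1).1 < (Lh h).2)%N, ((Lh h).2 <= m)%N, (0 < (Lh h.+1).1)%N
    & (h.+2 < q -> (Lh h).2 <= (Lh h.+2).1)%N].
Hypothesis chain_pair : forall h, (h < q)%N ->
  [/\ ((Lh h).1 < (Lh h).2)%N, ((Lh h).2 <= m.+1)%N & Uf (Lh h).1 (Lh h).2].

Lemma chain_start_mono h h' : (h <= h' < q)%N -> ((Lh h).1 <= (Lh h').1)%N.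
Proof.
move=> /andP [le_hh']; have [k ->] : exists k, h' = (h + k)%N by exists (h' - h); lia.
elim: k => [|k IH]; rewrite ?addn0 // addnS => lt_hk.
have := IH (ltnW lt_hk); case: (h + k)%N lt_hk => [|n] lt_n.
  by have [_ _ ? _] := chain_link lt_n; rewrite chain_start; lia.
have lt_n1 : (n.+1 < q)%N by lia.
by have [? _ _ link2] := chain_link lt_n1; have := link2 lt_n; lia.
Qed.

Lemma disjoint_shortcuts_parity c r n k : (r + n <= q)%N -> (k <= m.+1)%N ->
  (forall h, (r <= h < r + n)%N -> odd h == c -> (k <= (Lh h).1)%N) ->
  disjoint_shortcuts k [seq Lh h | h <- iota r n & odd h == c].
Proof.
elim: n r k => [|n IH] r k le_rnq le_km start_ge //=.
case: ifP => odd_r /=; last first.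
  by apply: IH => [||h h_range]; [lia | done | apply: start_ge; lia].
have lt_rq : (r < q)%N by lia.
have [? ? ?] := chain_pair lt_rq.
split => //; first by apply: start_ge => //; lia.
apply: IH => // [|h h_range odd_h]; first lia.
(* the next pair of the same parity is [r + 2] or later, and pairs two apart are disjoint *)
have le_r2h : (r.+2 <= h)%N.
  case: (ltnP r.+1 h) => // le_hr1; have h_eq : h = r.+1 by lia.
  by move: odd_h odd_r; rewrite h_eq /= => /eqP <-; case: (odd r).
have lt_r1 : (r.+1 < q)%N by lia.
have lt_r2 : (r.+2 < q)%N by lia.
have [_ _ _ /(_ lt_r2) link2] := chain_link lt_r1.
by have := @chain_start_mono r.+2 h; lia.
Qed.

(* consecutive pairs overlap, so together they bypass every toll arc *)
Lemma chain_cover : (0 < q)%N -> (Lh q.-1).2 = m.+1 ->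
  (m <= \sum_(0 <= h < q) bypassed (Lh h))%N.
Proof.
move=> q_gt0 last_end.
have start_le n : (n < q)%N -> ((Lh n).1 <= \sum_(0 <= h < n) bypassed (Lh h))%N.
  elim: n => [|n IH] lt_nq; first by rewrite chain_start.
  have [link _ _ _] := chain_link lt_nq.
  have [lt_n _ _] := chain_pair (ltnW lt_nq).
  by have := IH (ltnW lt_nq); rewrite big_nat_recr //= [bypassed (Lh n)]/bypassed; lia.
have lt_q1 : (q.-1 < q)%N by lia.
have [lt_last _ _] := chain_pair lt_q1.
have sum_split : (\sum_(0 <= h < q) bypassed (Lh h)
    = \sum_(0 <= h < q.-1) bypassed (Lh h) + bypassed (Lh q.-1))%N.
  by rewrite -big_nat_recr // prednK.
by have := start_le _ lt_q1; rewrite sum_split /bypassed last_end; lia.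
Qed.

Lemma bypassed_even_le : (1 < q)%N -> (\sum_(p <- parity_pairs L false) bypassed p <= m.-1)%N.
Proof.
move=> lt_1q; have lt_0q : (0 < q)%N by lia.
have [lt_01 _ _] := chain_pair lt_0q.
have [_ end0 _ _] := chain_link lt_1q.
have := @disjoint_shortcuts_parity false 0 q 0 (leqnn _) (leq0n _) (fun _ _ _ => leq0n _).
have [q' q_eq] : exists q', q = q'.+2 by exists q.-2; lia.
rewrite /parity_pairs q_eq /= => -[_ _ _ _ /disjoint_shortcuts_bound].
(* the pair [(0, j(1))] ends before [m + 1], and any later even pair ends at most there *)
rewrite big_cons /bypassed chain_start /=.
by case: (filter _ _) => [|h hs]; rewrite /= ?big_nil; lia.
Qed.

Lemma bypassed_odd_le : (1 < q)%N -> (\sum_(p <- parity_pairs L true) bypassed p <= m.-1)%N.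
Proof.
move=> lt_1q.
have start_ge h : (0 <= h < 0 + q)%N -> odd h == true -> (1 <= (Lh h).1)%N.
  case: h => [|h] // h_range _; have lt_h1 : (h.+1 < q)%N by lia.
  by have [] := chain_link lt_h1.
have := @disjoint_shortcuts_parity true 0 q 1 (leqnn _) (ltn0Sn _) start_ge.
move/disjoint_shortcuts_bound.
have [q' q_eq] : exists q', q = q'.+2 by exists q.-2; lia.
by rewrite /parity_pairs q_eq /=; lia.
Qed.

End Chain.

Section Shortcuts.
Hypothesis P_spath : spath src tgt s t P.
Hypothesis ups_spec : forall i j, (i < j <= m.+1)%N -> Uf i j ->
  [/\ spath src tgt (TERM tgt toll s P i) (INIT src toll t P j) (ups i j),
      toll_free toll (ups i j) & cost w (ups i j) = UU i j].

Lemma build_cost k M : disjoint_shortcuts k M ->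
  (cost w (build toll P ups k M)
     + \sum_(p <- M) cost w (slice (upto toll P p.1) (before toll P p.2)) =
   cost w (slice (before toll P k) (size P)) + \sum_(p <- M) UU p.1 p.2)%N.
Proof.
elim: M k => [|[i j] M IH] k /=.
  by move=> _; rewrite !big_nil /slice take_size.
case=> /= le_ki lt_ij le_jm Uij disj.
have ij_range : (i < j <= m.+1)%N by lia.
have [_ _ cost_ups] := ups_spec ij_range Uij.
have le_kiP : (before toll P k <= upto toll P i <= size P)%N.
  by rewrite before_upto ?upto_le //; lia.
have le_ijP : (upto toll P i <= before toll P j <= size P)%N.
  by rewrite upto_before ?before_le.
have := IH j disj; rewrite !big_cons /= !cost_cat cost_ups.
rewrite (cost_slice_cat le_kiP) (cost_slice_cat le_ijP).
by rewrite /slice; lia.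
Qed.

Lemma build_count k M : disjoint_shortcuts k M ->
  (count toll (build toll P ups k M) + \sum_(p <- M) bypassed p = m - k.-1)%N.
Proof.
elim: M k => [|[i j] M IH] k /=.
  move=> le_km; rewrite big_nil addn0.
  have -> : drop (before toll P k) P = slice (before toll P k) (size P) by rewrite /slice take_size.
  rewrite count_slice ?before_le //.
  by rewrite take_size count_take_before // mP_count.
case=> /= le_ki lt_ij le_jm Uij disj.
have ij_range : (i < j <= m.+1)%N by lia.
have [_ tf_ups _] := ups_spec ij_range Uij.
have count_ups : count toll (ups i j) = 0%N.
  by apply/eqP; rewrite -leqn0 leqNgt -has_count -all_predC.
have := IH j disj; rewrite big_cons /= !count_cat count_ups.
rewrite -/(slice (before toll P k) (upto toll P i)) count_slice; last by apply: before_upto; lia.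
rewrite count_take_upto ?count_take_before /bypassed /=; lia.
Qed.

Lemma sum_LL_le_slices k M : disjoint_shortcuts k M ->
  (\sum_(p <- M) LLL p.1 p.2
     <= \sum_(p <- M) cost w (slice (upto toll P p.1) (before toll P p.2)))%N.
Proof.
elim: M k => [|[i j] M IH] k /=; first by rewrite !big_nil.
case=> /= _ lt_ij le_jm _ disj; rewrite !big_cons /=.
by apply: leq_add; [apply: LL_le_slice; lia | exact: IH disj].
Qed.

Hypothesis st_reach : Uf 0 m.+1.
Hypothesis m_gt0 : (0 < m)%N.

Local Notation TPs := (TP src tgt toll w s t P).
Local Notation shortcut_path c := (build toll P ups 0 (parity_pairs TPs c)).

Lemma parity_disjoint_shortcuts c : disjoint_shortcuts 0 (parity_pairs TPs c).
Proof.
have [_ start _ links [pairs _]] := TP_inv st_reach m_gt0.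
by apply: (disjoint_shortcuts_parity start links pairs).
Qed.

Lemma parity_B_bound c :
  (Bp src tgt toll w s t P - \sum_(p <- parity_pairs TPs c) slack p
     <= Bp src tgt toll w s t (shortcut_path c))%R.
Proof.
have disj := parity_disjoint_shortcuts c.
have := build_cost disj; have := sum_LL_le_slices disj.
rewrite /slice /= drop0 take_size /Bp /slack sumrB !sumz_Posz; lia.
Qed.

Lemma parity_toll_count c :
  (mT toll (shortcut_path c) + \sum_(p <- parity_pairs TPs c) bypassed p = m)%N.
Proof. by have := build_count (parity_disjoint_shortcuts c); rewrite subn0. Qed.

Lemma VP_parity_split : VP src tgt toll w s t P =
  (\sum_(p <- parity_pairs TPs false) slack p + \sum_(p <- parity_pairs TPs true) slack p)%R.
Proof.
have [_ _ _ _ [_ sum_slack]] := TP_inv st_reach m_gt0.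
by rewrite VP_prefix_sum // -sum_slack big_parity_split.
Qed.

Lemma shortcut_toll_counts : (1 < size TPs)%N ->
  [/\ (0 < mT toll (shortcut_path false))%N, (0 < mT toll (shortcut_path true))%N
    & (mT toll (shortcut_path false) + mT toll (shortcut_path true) <= m)%N].
Proof.
move=> two_pairs; have [size_gt0 start last links [pairs _]] := TP_inv st_reach m_gt0.
have last_end : (nth d TPs (size TPs).-1).2 = m.+1.
  have m_range : (0 < m <= m)%N by rewrite m_gt0 leqnn.
  by have [_ ? ? _ _] := mr_pair_spec st_reach m_range; rewrite last; lia.
have := chain_cover start links pairs size_gt0 last_end; rewrite big_parity_split /=.
have := bypassed_even_le start links pairs two_pairs.
have := bypassed_odd_le start links pairs two_pairs.
have := parity_toll_count false; have := parity_toll_count true.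
by split; lia.
Qed.

Lemma Bp_ge0 : (forall q, spath src tgt s t q -> all (fun a => ~~ toll a || (a \in P)) q ->
    cost w P <= cost w q) -> (0 <= Bp src tgt toll w s t P)%R.
Proof.
move=> P_min; have st_range : (0 < m.+1 <= m.+1)%N by rewrite leqnn.
have [ups_spath ups_tf _] := ups_spec st_range st_reach.
rewrite INIT_last /= in ups_spath.
have [[q [q_spath q_tf q_cost]] _] := tf_dist_spec ups_spath ups_tf.
have q_in_N0 : all (fun a => ~~ toll a || (a \in P)) q.
  by apply: sub_all q_tf => a /= ->.
have := P_min q q_spath q_in_N0.
by rewrite /Bp /L_inf -q_cost; lia.
Qed.

End Shortcuts.
End TollPath.

Theorem theorem6 (V A : finType) (src tgt : A -> V) (toll : pred A)
    (w : A -> nat) (s t : V) (P : seq A) (ups : nat -> nat -> seq A) :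
  (* standing assumption: a toll-free s-t path exists *)
  tf_reach src tgt toll s t ->
  valid src tgt toll w s t P ->
  (* ups i j is a shortest toll-free path from TERM(tau_i) to INIT(tau_j) *)
  (forall i j, (i < j <= (mP toll P).+1)%N -> Ufin src tgt toll s t P i j ->
     [/\ spath src tgt (TERM tgt toll s P i) (INIT src toll t P j) (ups i j),
         toll_free toll (ups i j)
       & cost w (ups i j) = U src tgt toll w s t P i j]) ->
  ((VP src tgt toll w s t P)%:~R
     < (alpha (mT toll P))^-1 * (Bp src tgt toll w s t P)%:~R)%R ->
  ((alpha (mT toll P))^-1 * (Bp src tgt toll w s t P)%:~R
     <= (alpha (mT toll (P1 src tgt toll w s t P ups)))^-1
        * (Bp src tgt toll w s t (P1 src tgt toll w s t P ups))%:~R)%R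
  \/
  ((alpha (mT toll P))^-1 * (Bp src tgt toll w s t P)%:~R
     <= (alpha (mT toll (P2 src tgt toll w s t P ups)))^-1
        * (Bp src tgt toll w s t (P2 src tgt toll w s t P ups))%:~R)%R.
Proof.
move=> st_tf_reach [P_spath mT_gt0 P_min] ups_spec lt_VP.
have mT_eq : mT toll P = mP toll P by rewrite /mT mP_count.
rewrite mT_eq in mT_gt0 lt_VP *.
have st_reach : Ufin src tgt toll s t P 0 (mP toll P).+1 by rewrite /Ufin INIT_last.
case: (ltnP 1 (size (TP src tgt toll w s t P))) => [two_pairs | one_pair]; last first.
  by right; rewrite P2_single // mT_eq.
have [m1_gt0 m2_gt0 le_m12] := shortcut_toll_counts P_spath ups_spec st_reach mT_gt0 two_pairs.
have B_bound := parity_B_bound P_spath ups_spec st_reach mT_gt0.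
rewrite (VP_parity_split w st_reach mT_gt0) intrD in lt_VP.
rewrite P1E P2E; apply: (ratio_dichotomy _ _ (alpha_add_le m1_gt0 m2_gt0 le_m12) _ _ _ lt_VP).
- exact: alpha_ge1.
- exact: alpha_ge1.
- by rewrite ler0z (Bp_ge0 P_spath ups_spec st_reach mT_gt0).
- by rewrite -intrB ler_int B_bound.
- by rewrite -intrB ler_int B_bound.
Qed.
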